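(* Let $f_1,\ldots,f_N\colon[0,1]\to[0,1]$ be $C^1$-diffeomorphisms onto their images, $\mathcal I_P=\{i\colon f_i\text{ preserves orientation}\}$, $\mathcal I_R=\{i\colon f_i\text{ reverses orientation}\}$. Let $A=(a_{ij})_{i,j=1}^{2N}$ be given by $a_{ij}=1$ if ($i\in\mathcal I_P$ and $j\in\{1,\ldots,N\}$), or ($i\in\mathcal I_R$ and $j\in\{N+1,\ldots,2N\}$), or ($i-N\in\mathcal I_P$ and $j\in\{N+1,\ldots,2N\}$), or ($i-N\in\mathcal I_R$ and $j\in\{1,\ldots,N\}$), and $a_{ij}=0$ otherwise. Let $\Sigma_A\subset\{1,\ldots,2N\}^{\mathbb Z}$ be the set of $A$-admissible sequences (those $\omega$ with $a_{\omega_n\omega_{n+1}}=1$ for all $n$), $\sigma_A$ the shift on $\Sigma_A$, and $\sigma$ the shift on $\Sigma_N=\{1,\ldots,N\}^{\mathbb Z}$. Define $\pi\colon\Sigma_A\to\Sigma_N$ by $\pi(\omega)_n=\overline{\omega_n}$, where $\overline i=i$ for $i\le N$ and $\overline i=i-N$ for $i>N$. Then $\pi$ is a two-to-one semi-conjugation between $\sigma_A$ and $\sigma$: $\pi$ is continuous, surjective, $\pi\circ\sigma_A=\sigma\circ\pi$, and each point of $\Sigma_N$ has exactly two preimages under $\pi$. *)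

From HB Require Import structures.
From mathcomp Require Import all_boot all_order all_algebra.
From mathcomp Require Import all_classical all_reals all_analysis.
Set Implicit Arguments. Unset Strict Implicit. Unset Printing Implicit Defensive.
Import Order.TTheory GRing.Theory Num.Theory.
Import numFieldNormedType.Exports.
Local Open Scope classical_set_scope.
Local Open Scope ring_scope.

(* f : R -> R restricted to [0,1] is a C^1-diffeomorphism of [0,1] onto its
   image contained in [0,1]: f maps [0,1] into [0,1], is injective on [0,1],
   and has at every point of [0,1] a (one-sided at the endpoints) derivative
   g x, with g continuous on [0,1] and nowhere zero there (so that the inverse
   is C^1 too). *)
Definition I01 {R : realType} : set R := [set x : R | 0 <= x <= 1].

Definition C1_diffeo01 {R : realType} (f : R -> R) : Prop :=
  [/\ forall x, I01 x -> I01 (f x),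
      {in I01 &, injective f} &
      exists g : R -> R,
        [/\ {within (@I01 R), continuous g},
            forall x, I01 x -> g x != 0 &
            forall x, I01 x ->
              (fun y => (f y - f x) / (y - x)) @ within (@I01 R) x^' --> g x]].

Definition preserves_orientation {R : realType} (f : R -> R) : Prop :=
  {in I01 &, forall x y, x < y -> f x < f y}.
Definition reverses_orientation {R : realType} (f : R -> R) : Prop :=
  {in I01 &, forall x y, x < y -> f y < f x}.

(* Symbols {1,...,2N} are encoded (0-based) as 'I_(N + N):
   k < N stands for symbol k+1, k >= N stands for symbol k+1 (> N). *)

Definition sym_bar (N : nat) (i : 'I_(N + N)) : 'I_N :=
  match fintype.split i with inl k => k | inr k => k end.

Definition trans_mx {R : realType} (N : nat) (f : 'I_N -> R -> R)
    (i j : 'I_(N + N)) : nat :=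
  if `[< (exists k, fintype.split i = inl k /\ preserves_orientation (f k)) /\ (j < N)%N
      \/ (exists k, fintype.split i = inl k /\ reverses_orientation (f k)) /\ (N <= j)%N
      \/ (exists k, fintype.split i = inr k /\ preserves_orientation (f k)) /\ (N <= j)%N
      \/ (exists k, fintype.split i = inr k /\ reverses_orientation (f k)) /\ (j < N)%N >]
  then 1%N else 0%N.

Notation fullshift n := ({ptws int -> discrete_topology 'I_n}).

Definition sshift (n : nat) (w : fullshift n) : fullshift n := fun m => w (m + 1).

Definition SigmaA {R : realType} (N : nat) (f : 'I_N -> R -> R) : set (fullshift (N + N)) :=
  [set w | forall m : int, trans_mx f (w m) (w (m + 1)) = 1%N].

Definition proj_bar (N : nat) (w : fullshift (N + N)) : fullshift N :=
  fun m => sym_bar (w m).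

From HB Require Import structures.
From mathcomp Require Import all_boot all_order all_algebra.
From mathcomp Require Import all_classical all_reals all_analysis.
Import Order.TTheory GRing.Theory Num.Theory.
Import numFieldNormedType.Exports.
Local Open Scope classical_set_scope.
Local Open Scope ring_scope.

Set Implicit Arguments.
Unset Strict Implicit.
Unset Printing Implicit Defensive.

(* A C^1-diffeomorphism of [0, 1] into itself is continuous and injective,
   hence strictly monotone: it either preserves or reverses orientation.
   View the symbols N+1, ..., 2N as an upper sheet over 1, ..., N.  Then
   A-admissibility of w says exactly that w_(n+1) lies on the same sheet as
   w_n, or on the other one iff f_(bar w_n) reverses orientation.  Over a
   given s in Sigma_N, the sheets of a lift thus solve the recurrence
   x_(n+1) = x_n xor [f_(s_n) reverses orientation] on Z, which has exactly
   one solution for each value of x_0: every s has exactly two lifts. *)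

Lemma ptws_comp_continuous {I : eqType} {T : discreteTopologicalType}
    {U : topologicalType} (g : T -> U) :
  continuous (fun w : {ptws I -> T} => (fun i => g (w i)) : {ptws I -> U}).
Proof.
move=> w; apply/cvg_sup => [|i]; first by apply: fmap_filter; exact: nbhs_filter.
apply: (@continuous_comp_initial _ _ _ (fun v : {ptws I -> U} => v i)) => {}w.
apply: (near_cst_continuous (g (w i))).
have : \forall v \near w, v i = w i.
  exact: (@proj_continuous _ _ i w [set w i] (discrete_set1 _)).
by apply: filterS => v /= ->.
Qed.

Lemma within_dnbhs_continuous {T U : topologicalType} (A : set T) (f : T -> U) x :
  f @ within A x^' --> f x -> f @ within A (nbhs x) --> f x.
Proof.
move=> fx P Pfx; have := fx P Pfx; rewrite /= !near_simpl !near_withinE /=.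
apply: filterS => y Py Ay; have [->|yx] := eqVneq y x; first exact: nbhs_singleton.
exact: Py.
Qed.

Lemma diff_quotient_cvg_continuous {R : numFieldType} (A : set R) (f : R -> R) (x l : R) :
  (fun y => (f y - f x) / (y - x)) @ within A x^' --> l ->
  f @ within A (nbhs x) --> f x.
Proof.
move=> ql; apply: within_dnbhs_continuous.
have yx : (fun y => y - x) @ within A x^' --> x - x.
  apply: cvgB; last exact: cvg_cst.
  apply: cvg_trans (cvg_within _) _; exact: nbhs_dnbhs.
have : (fun y => f x + (f y - f x) / (y - x) * (y - x)) @ within A x^' -->
    f x + l * (x - x) by apply: cvgD; [exact: cvg_cst | exact: cvgM].
rewrite subrr mulr0 addr0; apply: cvg_trans; apply: near_eq_cvg; near=> y.
have /divfK -> : y - x != 0.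
  by rewrite subr_eq0; near: y; exact: (cvg_within A (nbhs_dnbhs_neq x)).
by rewrite addrC subrK.
Unshelve. all: by end_near. Qed.

Lemma mem_I01 (R : realType) : @I01 R =i `[0, 1].
Proof. by move=> x; apply/idP/idP; rewrite in_itv /= inE. Qed.

Lemma C1_diffeo01_continuous (R : realType) (f : R -> R) :
  C1_diffeo01 f -> {within I01, continuous f}.
Proof.
case=> _ _ [g [_ _ dg]]; apply/subspace_continuousP => x /dg.
exact: diff_quotient_cvg_continuous.
Qed.

Lemma C1_diffeo01_monotone (R : realType) (f : R -> R) :
  C1_diffeo01 f -> preserves_orientation f \/ reverses_orientation f.
Proof.
move=> /[dup] /C1_diffeo01_continuous f_cont [_ f_inj _].
have f_cont_itv : {within [set` `[0, 1]], continuous f}.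
  by rewrite (_ : [set` _] = I01) //; apply/seteqP; split=> x; rewrite /= in_itv.
have sub_itv : {subset `[0, 1] <= @I01 R} by move=> x; rewrite mem_I01.
have sub_I01 : {subset @I01 R <= `[0, 1]} by move=> x; rewrite mem_I01.
have [f_up|f_down] := itv_continuous_inj_mono f_cont_itv (sub_in2 sub_itv f_inj).
- by left; apply: (sub_in2 sub_I01 f_up).
- by right=> x y /sub_I01 xI /sub_I01 yI; apply: f_down.
Qed.

Lemma preserves_orientation_not_reverses (R : realType) (f : R -> R) :
  preserves_orientation f -> ~ reverses_orientation f.
Proof.
have I01_0 : (0 : R) \in I01 by rewrite mem_I01 in_itv /= lexx ler01.
have I01_1 : (1 : R) \in I01 by rewrite mem_I01 in_itv /= lexx ler01.
move=> /(_ _ _ I01_0 I01_1 ltr01) up /(_ _ _ I01_0 I01_1 ltr01).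
by move/(lt_trans up); rewrite ltxx.
Qed.

Section Sheets.
Variable N : nat.
Implicit Types (i : 'I_(N + N)) (k : 'I_N) (b : bool).

Definition sheet i : bool := (N <= i)%N.

Definition lift_sym b k : 'I_(N + N) := if b then rshift N k else lshift N k.

Lemma sym_bar_lift b k : sym_bar (lift_sym b k) = k.
Proof.
by rewrite /sym_bar; case: b; rewrite /lift_sym ?(unsplitK (inl k)) ?(unsplitK (inr k)).
Qed.

Lemma sheet_lift b k : sheet (lift_sym b k) = b.
Proof. by case: b; rewrite /sheet /= ?leq_addr // leqNgt ltn_ord. Qed.

Lemma lift_symK i : lift_sym (sheet i) (sym_bar i) = i.
Proof.
rewrite /sheet /sym_bar; case: splitP => k ik; apply: val_inj; rewrite /= ik.
  by rewrite leqNgt ltn_ord.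
by rewrite leq_addr.
Qed.

Lemma split_inlE (Q : 'I_N -> Prop) i :
  (exists k, fintype.split i = inl k /\ Q k) = (~~ sheet i /\ Q (sym_bar i)).
Proof.
rewrite propeqE /sheet /sym_bar; case: splitP => k ik; rewrite ik.
  by rewrite leqNgt ltn_ord; split=> [[? [[<-]]]|[? Qk]]; last exists k.
by rewrite leq_addr; split=> [[? []]|[]].
Qed.

Lemma split_inrE (Q : 'I_N -> Prop) i :
  (exists k, fintype.split i = inr k /\ Q k) = (sheet i /\ Q (sym_bar i)).
Proof.
rewrite propeqE /sheet /sym_bar; case: splitP => k ik; rewrite ik.
  by rewrite leqNgt ltn_ord; split=> [[? []]|[]].
by rewrite leq_addr; split=> [[? [[<-]]]|[? Qk]]; last exists k.
Qed.

End Sheets.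

Lemma int_succ_const (T : Type) (z : int -> T) :
  (forall m, z (m + 1) = z m) -> forall m, z m = z 0.
Proof.
move=> zS; elim/int_rect => // n <-; first by rewrite -addn1 PoszD zS.
by rewrite -zS -addn1 PoszD opprD addrNK.
Qed.

Section XorRecurrence.
Variable c : int -> bool.

Definition xor_path (b : bool) (m : int) : bool :=
  match m with
  | Posz n => b (+) \big[addb/false]_(k < n) c k
  | Negz n => b (+) \big[addb/false]_(k < n.+1) c (Negz k)
  end.

Lemma xor_path0 b : xor_path b 0 = b.
Proof. by rewrite /= big_ord0 addbF. Qed.

Lemma xor_pathS b m : xor_path b (m + 1) = xor_path b m (+) c m.
Proof.
case: m => [n|[|n]] /=.
- by rewrite addn1 big_ord_recr addbA.
- by rewrite subnn big_ord0 big_ord_recr big_ord0 /= addbF addbK.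
- by rewrite subSS subn0 [in RHS]big_ord_recr /= addbA addbK.
Qed.

Lemma xor_path_unique (x : int -> bool) :
  (forall m, x (m + 1) = x m (+) c m) -> x = xor_path (x 0).
Proof.
move=> xS; apply/funext => m.
have /esym : x m (+) xor_path (x 0) m = x 0 (+) xor_path (x 0) 0.
  by apply: (@int_succ_const _ (fun m => x m (+) xor_path (x 0) m)) => k;
    rewrite xS xor_pathS addbACA addbb addbF.
by rewrite xor_path0 addbb => h; rewrite -[x m]addbF h addKb.
Qed.

End XorRecurrence.

Section Lifts.
Variables (R : realType) (N : nat) (f : 'I_N -> R -> R).
Hypothesis f_monotone :
  forall k, preserves_orientation (f k) \/ reverses_orientation (f k).

Definition reversing (k : 'I_N) : bool := `[< reverses_orientation (f k) >].

Lemma preservingE k : preserves_orientation (f k) = ~~ reversing k.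
Proof.
rewrite propeqE; split=> [/preserves_orientation_not_reverses/asboolPn //|].
by case: (f_monotone k) => // /asboolP; rewrite /reversing => ->.
Qed.

Lemma trans_mx_eq1 (i j : 'I_(N + N)) :
  trans_mx f i j = 1%N <-> sheet j = sheet i (+) reversing (sym_bar i).
Proof.
rewrite /trans_mx !split_inlE !split_inrE preservingE.
rewrite -[reverses_orientation _]asboolE -/(reversing _).
rewrite -[(j < N)%N]negbK -leqNgt -/(sheet j).
rewrite !(asbool_or, asbool_and, asboolb).
by case: (sheet i) (sheet j) (reversing _) => [] [] [].
Qed.

Lemma SigmaAE (w : fullshift (N + N)) :
  SigmaA f w <->
  forall m, sheet (w (m + 1)) = sheet (w m) (+) reversing (sym_bar (w m)).
Proof. by split=> adm m; apply/trans_mx_eq1; exact: adm. Qed.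

Definition lift_seq (s : fullshift N) (b : bool) : fullshift (N + N) :=
  fun m => lift_sym (xor_path (fun n => reversing (s n)) b m) (s m).

Lemma proj_bar_lift_seq s b : proj_bar (lift_seq s b) = s.
Proof. by apply/funext => m; rewrite /proj_bar sym_bar_lift. Qed.

Lemma lift_seq_SigmaA s b : SigmaA f (lift_seq s b).
Proof. by apply/SigmaAE => m; rewrite !sheet_lift sym_bar_lift xor_pathS. Qed.

Lemma lift_seq_inj s : injective (lift_seq s).
Proof.
by move=> b b' /(congr1 (fun w => sheet (w 0))); rewrite !sheet_lift !xor_path0.
Qed.

Lemma SigmaA_lift_seq w : SigmaA f w -> w = lift_seq (proj_bar w) (sheet (w 0)).
Proof.
move=> /SigmaAE /xor_path_unique sheetE; apply/funext => m.
by rewrite /lift_seq -(congr1 (fun x => x m) sheetE) lift_symK.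
Qed.

End Lifts.

Theorem lemma3p2 (R : realType) (N : nat) (f : 'I_N -> R -> R)
  (hf : forall i, C1_diffeo01 (f i)) :
  [/\ {within SigmaA f, continuous (@proj_bar N)},
      (forall s : fullshift N, exists2 w, SigmaA f w & proj_bar w = s),
      (forall w, SigmaA f w -> SigmaA f (sshift w)),
      (forall w, SigmaA f w -> proj_bar (sshift w) = sshift (proj_bar w)) &
      (forall s : fullshift N, exists w1 w2,
          [/\ w1 <> w2, SigmaA f w1 /\ SigmaA f w2,
              proj_bar w1 = s, proj_bar w2 = s &
              forall w, SigmaA f w -> proj_bar w = s -> w = w1 \/ w = w2])].
Proof.
have f_mono k := C1_diffeo01_monotone (hf k).
split=> [||w adm m|//|s]; first exact/continuous_subspaceT/ptws_comp_continuous.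
- move=> s; exists (lift_seq f s true); first exact: lift_seq_SigmaA.
  exact: proj_bar_lift_seq.
- exact: adm (m + 1).
exists (lift_seq f s true), (lift_seq f s false); split.
- by move/lift_seq_inj.
- by split; exact: lift_seq_SigmaA.
- exact: proj_bar_lift_seq.
- exact: proj_bar_lift_seq.
move=> w adm ws; rewrite (SigmaA_lift_seq f_mono adm) ws.
by case: (sheet _); [left|right].
Qed.
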